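(* Let $A\in\mathbb{R}^{n\times n}$ be symmetric with eigenvalues $\alpha_1\ge\cdots\ge\alpha_n$, $g\in\mathbb{R}^n$ nonzero, $\Delta>0$, and consider the TRS of minimizing $\frac12x^TAx+x^Tg$ subject to $\|x\|\le\Delta$, in the easy case. With the notation of the context, suppose $\|x_{opt}\|=\|x_k\|=\Delta$. Then $$\sin\angle(x_{opt},x_k)\le\sqrt\kappa\sqrt{\sin^2\angle(x_{opt},\mathcal{K}_k)+\sin^4\angle(x_{opt},\mathcal{K}_k)}\le2\sqrt\kappa\Big(\frac{\sqrt\kappa-1}{\sqrt\kappa+1}\Big)^k+4\sqrt\kappa\Big(\frac{\sqrt\kappa-1}{\sqrt\kappa+1}\Big)^{2k},$$ where $\mathcal{K}_k=\mathcal{K}_k(A,g)$.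
   Context: Norms are Euclidean. $x_{opt}$ is a global minimizer of the TRS with multiplier $\lambda_{opt}\ge0$ ($(A+\lambda_{opt}I)x_{opt}=-g$, $\lambda_{opt}(\Delta-\|x_{opt}\|)=0$, $A+\lambda_{opt}I\succeq0$); easy case: $\lambda_{opt}>-\alpha_n$. $\kappa=(\alpha_1+\lambda_{opt})/(\alpha_n+\lambda_{opt})$. $\mathcal{K}_k(A,g)=\mathrm{span}\{g,Ag,\ldots,A^{k-1}g\}$ with orthonormal basis $Q_k$ from the Lanczos process ($q_1=g/\|g\|$, $T_k=Q_k^TAQ_k$ tridiagonal). GLTR iterate $x_k=Q_kh_k$ where $h_k$ minimizes $\frac12h^TT_kh+\|g\|h^Te_1$ over $\|h\|\le\Delta$. For a nonzero vector $p$ and subspace $\mathcal{W}$ with orthonormal basis $W$, $\sin\angle(p,\mathcal{W})=\|(I-WW^T)p\|/\|p\|$; for vectors, $\sin\angle(x_{opt},x_k)=\min_{\chi}\|x_{opt}/\Delta-\chi x_k\|$. *)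

From HB Require Import structures.
From mathcomp Require Import all_boot all_order all_algebra.
From mathcomp Require Import classical_sets reals.
Set Implicit Arguments. Unset Strict Implicit. Unset Printing Implicit Defensive.
Import Order.TTheory GRing.Theory Num.Theory.
Local Open Scope ring_scope.

Section TRSDefs.
Variable R : realType.

Definition vnorm (n : nat) (v : 'cV[R]_n) : R := Num.sqrt (\sum_i v i 0 ^+ 2).

Definition trs_obj (n : nat) (A : 'M[R]_n) (g x : 'cV[R]_n) : R :=
  (x^T *m A *m x) 0 0 / 2 + (x^T *m g) 0 0.

(* Krylov matrix: its rows are g, Ag, ..., A^(k-1) g; its row space is K_k(A,g) *)
Definition krylov_mx (n k : nat) (A : 'M[R]_n) (g : 'cV[R]_n) : 'M[R]_(k, n) :=
  \matrix_(i < k, j < n) ((A ^+ i *m g) j 0).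

Definition tridiagonal (k : nat) (T : 'M[R]_k) : Prop :=
  forall i j : 'I_k, (i.+1 < j)%N || (j.+1 < i)%N -> T i j = 0.

(* sin of angle between vector p and subspace with orthonormal basis W *)
Definition sin_vec_sub (n k : nat) (p : 'cV[R]_n) (W : 'M[R]_(n, k)) : R :=
  vnorm ((1%:M - W *m W^T) *m p) / vnorm p.

(* sin angle(x_opt, x_k) = min_chi || x_opt / Delta - chi x_k || *)
Definition sin_vec_vec (n : nat) (Delta : R) (xopt xk : 'cV[R]_n) : R :=
  inf [set vnorm (Delta^-1 *: xopt - chi *: xk) | chi in [set: R]].

End TRSDefs.

(* Let B = A + lambda I, whose Rayleigh quotients lie in [mu, M] with
   mu = alpha_n + lambda > 0 and M = alpha_1 + lambda, so kappa = M / mu.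
   On the sphere ||x|| = Delta the TRS objective satisfies
   f(x) - f(x_opt) = (x - x_opt)^T B (x - x_opt) / 2.  Since x_k minimizes f over
   the sphere points of K_k, comparing it with the point of K_k aligned with the
   projection of x_opt gives ||x_k - x_opt||^2 <= kappa (2 - 2 cos) Delta^2, where
   cos^2 = 1 - sin^2 angle(x_opt, K_k), and 2 - 2 cos <= sin^2 + sin^4.
   For sin angle(x_opt, K_k) <= 2 rho^k, map the spectrum of B affinely onto
   [-1, 1] (C = c(B)) and take the residual polynomial T_k(c(X)) / T_k(c(0)):
   it equals 1 at 0, so x_opt minus its action on x_opt lies in K_k, and the Pell
   identity T_k^2 - (X^2 - 1) U_(k-1)^2 = 1 bounds ||T_k(C)|| by 1, while
   T_k(c(0)) = (rho^k + rho^-k) / 2. *)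

From HB Require Import structures.
From mathcomp Require Import all_boot all_order all_algebra.
From mathcomp Require Import classical_sets reals.
From mathcomp Require Import complex.
From mathcomp Require Import ring lra zify.
Import Order.TTheory GRing.Theory Num.Theory.
Local Open Scope ring_scope.

Set Implicit Arguments. Unset Strict Implicit. Unset Printing Implicit Defensive.

Section InnerProduct.
Variable R : realType.

Definition dot n (u v : 'cV[R]_n) : R := (u^T *m v) 0 0.

Lemma dotC n (u v : 'cV[R]_n) : dot u v = dot v u.
Proof. by rewrite /dot -[u^T *m v]trmxK trmx_mul trmxK [in LHS]mxE. Qed.

Lemma dotDl n (u v w : 'cV[R]_n) : dot (u + v) w = dot u w + dot v w.
Proof. by rewrite /dot linearD /= mulmxDl mxE. Qed.

Lemma dotDr n (u v w : 'cV[R]_n) : dot w (u + v) = dot w u + dot w v.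
Proof. by rewrite /dot mulmxDr mxE. Qed.

Lemma dotZl n a (u w : 'cV[R]_n) : dot (a *: u) w = a * dot u w.
Proof. by rewrite /dot linearZ /= -scalemxAl mxE. Qed.

Lemma dotZr n a (u w : 'cV[R]_n) : dot w (a *: u) = a * dot w u.
Proof. by rewrite /dot -scalemxAr mxE. Qed.

Lemma dotNl n (u w : 'cV[R]_n) : dot (- u) w = - dot u w.
Proof. by rewrite -scaleN1r dotZl mulN1r. Qed.

Lemma dotNr n (u w : 'cV[R]_n) : dot w (- u) = - dot w u.
Proof. by rewrite -scaleN1r dotZr mulN1r. Qed.

Lemma dotBl n (u v w : 'cV[R]_n) : dot (u - v) w = dot u w - dot v w.
Proof. by rewrite dotDl dotNl. Qed.

Lemma dotBr n (u v w : 'cV[R]_n) : dot w (u - v) = dot w u - dot w v.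
Proof. by rewrite dotDr dotNr. Qed.

Lemma dot0r n (w : 'cV[R]_n) : dot w 0 = 0.
Proof. by rewrite /dot mulmx0 mxE. Qed.

Lemma dotMl m n (M : 'M[R]_(m, n)) (u : 'cV[R]_n) (v : 'cV[R]_m) :
  dot (M *m u) v = dot u (M^T *m v).
Proof. by rewrite /dot trmx_mul mulmxA. Qed.

Lemma dotMr m n (M : 'M[R]_(m, n)) (u : 'cV[R]_n) (v : 'cV[R]_m) :
  dot v (M *m u) = dot (M^T *m v) u.
Proof. by rewrite dotC dotMl dotC. Qed.

Lemma dotvv n (u : 'cV[R]_n) : dot u u = \sum_i u i 0 ^+ 2.
Proof. by rewrite /dot mxE; apply: eq_bigr => i _; rewrite mxE expr2. Qed.

Lemma dotvv_ge0 n (u : 'cV[R]_n) : 0 <= dot u u.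
Proof. by rewrite dotvv sumr_ge0 // => i _; exact: sqr_ge0. Qed.

Lemma dotvv_eq0 n (u : 'cV[R]_n) : dot u u = 0 -> u = 0.
Proof.
rewrite dotvv => /eqP; rewrite psumr_eq0 => [/allP u0|i _]; last exact: sqr_ge0.
apply/matrixP => i j; rewrite ord1 mxE.
by have /implyP/(_ isT) := u0 i (mem_index_enum _); rewrite sqrf_eq0 => /eqP.
Qed.

Lemma vnormE n (u : 'cV[R]_n) : vnorm u = Num.sqrt (dot u u).
Proof. by rewrite dotvv. Qed.

Lemma vnorm_ge0 n (u : 'cV[R]_n) : 0 <= vnorm u.
Proof. exact: sqrtr_ge0. Qed.

Lemma vnorm_sq n (u : 'cV[R]_n) : vnorm u ^+ 2 = dot u u.
Proof. by rewrite vnormE sqr_sqrtr ?dotvv_ge0. Qed.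

Lemma vnorm_eq0 n (u : 'cV[R]_n) : (vnorm u == 0) = (u == 0).
Proof.
apply/eqP/eqP => [u0|->]; last by rewrite vnormE dot0r sqrtr0.
by apply: dotvv_eq0; rewrite -vnorm_sq u0 expr0n.
Qed.

Lemma quad_dot n (S : 'M[R]_n) (v : 'cV[R]_n) : (v^T *m S *m v) 0 0 = dot v (S *m v).
Proof. by rewrite /dot mulmxA. Qed.

End InnerProduct.

Section Spectrum.
Variable R : realType.

(* Over [R[i]] the symmetric matrix [S] is unitarily diagonalizable with real
   diagonal, whose entries are eigenvalues of [S]. *)
Lemma quad_ge0_of_eigen_ge0 n (S : 'M[R]_n) : S^T = S ->
  (forall a, eigenvalue S a -> 0 <= a) -> forall v, 0 <= dot v (S *m v).
Proof.
move=> Ssym S_ge0 v.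
pose f := real_complex R; pose Sc := map_mx f S.
have Sc_herm : Sc \is hermsymmx.
  apply/is_hermitianmxP; rewrite expr0 scale1r.
  by apply/matrixP => i j; rewrite !mxE conj_Creal ?complex_real // -[in LHS]Ssym mxE.
have /orthomx_spectralP Sc_diag := hermitian_normalmx Sc_herm.
set P := spectralmx Sc in Sc_diag; set d := spectral_diag Sc in Sc_diag.
have Pu : P \is unitarymx := spectral_unitarymx Sc.
have d_ge0 i : 0 <= d 0 i.
  have d_real : d 0 i \is Num.real := mxOverP (hermitian_spectral_diag_real Sc_herm) 0 i.
  rewrite -(RRe_real d_real) ler0c; apply: S_ge0.
  rewrite -(eigenvalue_map f) -/Sc /f /= RRe_real //; apply/eigenvalueP; exists (row i P).
    rewrite -row_mul Sc_diag !mulmxA mulmxV ?spectral_unit // mul1mx.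
    by rewrite row_mul -row_mul mul_diag_mx; apply/rowP => j; rewrite !mxE.
  apply/eqP => Pi0; have := unitarymxP Pu.
  move/(congr1 (row i)); rewrite row_mul Pi0 mul0mx => /rowP /(_ i).
  by rewrite !mxE eqxx /= => /eqP; rewrite eq_sym oner_eq0.
pose vc := map_mx f v.
have vcT : map_mx Num.conj vc^T = map_mx f v^T.
  by apply/matrixP => i j; rewrite !mxE conj_Creal ?complex_real.
suff : 0 <= (map_mx Num.conj vc^T *m Sc *m vc) 0 0.
  by rewrite vcT /Sc -!map_mxM mxE ler0c quad_dot.
pose w := P *m vc.
have -> : map_mx Num.conj vc^T *m Sc *m vc = map_mx Num.conj w^T *m diag_mx d *m w.
  by rewrite Sc_diag invmx_unitary // /w trmx_mul map_mxM !mulmxA.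
rewrite mul_mx_diag !mxE sumr_ge0 // => j _.
by rewrite !mxE mulrAC mulr_ge0 // mulrC mul_conjC_ge0.
Qed.

Lemma eigenvalue_scale_shift n (A : 'M[R]_n) (s c b : R) : s != 0 ->
  eigenvalue (s *: A + c%:M) b -> eigenvalue A ((b - c) / s).
Proof.
move=> s0 /eigenvalueP [v vAb v0]; apply/eigenvalueP; exists v => //.
move: vAb; rewrite mulmxDr mul_mx_scalar -scalemxAr => /(canRL (addrK _)).
by rewrite -scalerBl => /(canRL (scalerK s0)); rewrite scalerA mulrC.
Qed.

Lemma rayleigh_bounds n (A : 'M[R]_n) (lo hi : R) : A^T = A ->
  (forall a, eigenvalue A a -> lo <= a <= hi) ->
  forall v, lo * dot v v <= dot v (A *m v) <= hi * dot v v.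
Proof.
move=> Asym A_spec v.
have shift_ge0 s c : s != 0 -> (forall a, eigenvalue A a -> 0 <= s * a + c) ->
    0 <= dot v ((s *: A + c%:M) *m v).
  move=> s0 sc_ge0; apply: quad_ge0_of_eigen_ge0 => [|b /(eigenvalue_scale_shift s0)].
    by rewrite linearD linearZ /= Asym tr_scalar_mx.
  by move/sc_ge0; rewrite mulrC divfK // subrK.
have dot_shift s c : dot v ((s *: A + c%:M) *m v) = s * dot v (A *m v) + c * dot v v.
  by rewrite mulmxDl mul_scalar_mx -scalemxAl dotDr !dotZr.
have lo_le : 0 <= dot v ((1 *: A + (- lo)%:M) *m v).
  by apply: shift_ge0 (oner_neq0 _) _ => a /A_spec /andP[lo_a _]; lra.
have le_hi : 0 <= dot v ((-1 *: A + hi%:M) *m v).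
  apply: shift_ge0; first by rewrite oppr_eq0 oner_eq0.
  by move=> a /A_spec /andP[_ a_hi]; lra.
by rewrite dot_shift in lo_le; rewrite dot_shift in le_hi; apply/andP; split; lra.
Qed.

End Spectrum.

Section Geometry.
Variable R : realType.

Lemma sym_mx_norm_le n (C : 'M[R]_n) (e : R) : C^T = C -> 0 <= e ->
  (forall v, `|dot v (C *m v)| <= e * dot v v) ->
  forall v, dot (C *m v) (C *m v) <= e ^+ 2 * dot v v.
Proof.
move=> Csym e_ge0 C_bound v.
set a := dot (C *m v) (C *m v); set b := dot v v.
have polar t : 2 * t * a <= e * (b + t ^+ 2 * a).
  (* Compare the quadratic form at v + t C v and at v - t C v. *)
  have dot_CC : dot v (C *m (C *m v)) = a by rewrite dotMr Csym.
  have /ler_normlP [_ le_plus] := C_bound (v + t *: (C *m v)).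
  have /ler_normlP [le_minus _] := C_bound (v - t *: (C *m v)).
  move: le_plus le_minus.
  rewrite !mulmxDr !mulmxN -!scalemxAr !(dotDl, dotDr, dotNl, dotNr, dotZl, dotZr).
  by rewrite dot_CC (dotC (C *m v) v) -/a -/b; lra.
have [e0|e_neq0] := eqVneq e 0; first by have := polar 1; rewrite e0 expr2 !mul0r; lra.
have := ler_wpM2l e_ge0 (polar e^-1).
have -> : e * (2 * e^-1 * a) = 2 * a by field.
have -> : e * (e * (b + e^-1 ^+ 2 * a)) = e ^+ 2 * b + a by field.
lra.
Qed.

Lemma orthonormal_dot n k (Q : 'M[R]_(n, k)) (u v : 'cV[R]_k) :
  Q^T *m Q = 1%:M -> dot (Q *m u) (Q *m v) = dot u v.
Proof. by move=> QQ; rewrite dotMl mulmxA QQ mul1mx. Qed.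

Section OrthoProjection.
Variables (n k : nat) (Q : 'M[R]_(n, k)).
Hypothesis QQ : Q^T *m Q = 1%:M.

Lemma dot_orthoproj_compl (x : 'cV[R]_n) (c : 'cV[R]_k) :
  dot ((1%:M - Q *m Q^T) *m x) (Q *m c) = 0.
Proof.
rewrite dotMr mulmxA mulmxBr mulmx1 mulmxA QQ mul1mx subrr mul0mx.
by rewrite /dot trmx0 mul0mx mxE.
Qed.

Lemma orthoproj_compl_sq (x : 'cV[R]_n) (p := (1%:M - Q *m Q^T) *m x) :
  dot p p = dot x x - dot (Q^T *m x) (Q^T *m x).
Proof.
have x_split : x = p + Q *m (Q^T *m x).
  by rewrite /p mulmxBl mul1mx mulmxA subrK.
rewrite {1 2}x_split dotDl !dotDr dot_orthoproj_compl dotC dot_orthoproj_compl.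
by rewrite orthonormal_dot // add0r addr0 addrK.
Qed.

Lemma orthoproj_compl_min (x : 'cV[R]_n) (c : 'cV[R]_k) (p := (1%:M - Q *m Q^T) *m x) :
  dot p p <= dot (x - Q *m c) (x - Q *m c).
Proof.
have -> : x - Q *m c = p + Q *m (Q^T *m x - c).
  by rewrite /p mulmxBl mul1mx mulmxBr !mulmxA addrA subrK.
rewrite dotDl !dotDr dot_orthoproj_compl dotC dot_orthoproj_compl.
by rewrite addr0 add0r lerDl dotvv_ge0.
Qed.

End OrthoProjection.

Lemma trs_obj_sub_on_sphere n (A : 'M[R]_n) (g xo x : 'cV[R]_n) (lam : R) :
  A^T = A -> (A + lam%:M) *m xo = - g -> dot x x = dot xo xo ->
  trs_obj A g x - trs_obj A g xo = dot (x - xo) ((A + lam%:M) *m (x - xo)) / 2.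
Proof.
move=> Asym xo_stat x_xo; set B := A + lam%:M in xo_stat *.
have g_B : g = - (B *m xo) by rewrite xo_stat opprK.
have A_B y : A *m y = B *m y - lam *: y by rewrite mulmxDl mul_scalar_mx addrK.
have B_sym : dot xo (B *m x) = dot x (B *m xo).
  by rewrite dotMr linearD /= Asym tr_scalar_mx dotC.
rewrite /trs_obj !quad_dot -[(x^T *m g) 0 0]/(dot x g) -[(xo^T *m g) 0 0]/(dot xo g).
rewrite g_B !A_B !(mulmxBr, dotBl, dotBr, dotZr, dotNr) B_sym x_xo.
lra.
Qed.

End Geometry.

Section Chebyshev.
Variable R : comNzRingType.

(* The Chebyshev pair [(T_k, U_(k-1))], characterized by
   [T_k + sqrt(X^2 - 1) U_(k-1) = (X + sqrt(X^2 - 1))^k]. *)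
Fixpoint chebTU (k : nat) : {poly R} * {poly R} :=
  if k is k'.+1 then
    let: (t, u) := chebTU k' in ('X * t + ('X ^+ 2 - 1) * u, t + 'X * u)
  else (1, 0).

Lemma chebTU_pell k :
  (chebTU k).1 ^+ 2 - ('X ^+ 2 - 1) * (chebTU k).2 ^+ 2 = 1.
Proof.
elim: k => [|k] /=; first by rewrite expr1n expr0n mulr0 subr0.
case: (chebTU k) => t u /= pell; rewrite -[RHS]pell; ring.
Qed.

Lemma size_chebTU k : (size (chebTU k).1 <= k.+1)%N /\ (size (chebTU k).2 <= k)%N.
Proof.
have size_X2B1 : (size ('X ^+ 2 - 1 : {poly R})%R <= 3)%N.
  by rewrite (leq_trans (size_polyD _ _)) // size_polyN size_poly1 size_polyXn.
elim: k => [|k] /=; first by rewrite size_poly1 size_poly0.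
case: (chebTU k) => t u /= [st su].
have size_mul_le (p q : {poly R}) m :
    (size p + size q <= m.+1)%N -> (size (p * q)%R <= m)%N.
  by move=> pq_m; apply: leq_trans (size_polyMleq p q) _; lia.
have sX : size ('X : {poly R}) = 2%N by rewrite size_polyX.
split; rewrite (leq_trans (size_polyD _ _)) // geq_max; apply/andP; split.
- by apply: size_mul_le; rewrite sX add2n !ltnS.
- by apply: size_mul_le; rewrite -add3n leq_add.
- by apply: leq_trans st _.
- by apply: size_mul_le; rewrite sX add2n !ltnS.
Qed.

End Chebyshev.

Lemma chebT_joukowski (F : numFieldType) k (t : F) : t != 0 ->
  (chebTU F k).1.[(t + t^-1) / 2] = (t ^+ k + t ^- k) / 2.
Proof.
move=> t0; set x := (t + t^-1) / 2; set e := (t^-1 - t) / 2.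
have : (chebTU F k).1.[x] + e * (chebTU F k).2.[x] = t ^- k /\
       (chebTU F k).1.[x] - e * (chebTU F k).2.[x] = t ^+ k.
  elim: k => [|k] /=; first by rewrite hornerC horner0 mulr0 addr0 subr0 invr1.
  case: (chebTU F k) => T U /= [Tplus Tminus].
  rewrite !hornerE (exprS t) invfM -Tplus -Tminus /x /e.
  by split; field.
by move=> [Tplus Tminus]; rewrite -Tplus -Tminus; field.
Qed.

Lemma horner_mx_comp (R : comNzRingType) n (A : 'M[R]_n.+1) (p q : {poly R}) :
  horner_mx A (p \Po q) = horner_mx (horner_mx A q) p.
Proof.
rewrite comp_polyE rmorph_sum -[in RHS](coefK p) poly_def rmorph_sum.
by apply: eq_bigr => i _; rewrite /= !horner_mxZ !rmorphXn /= horner_mx_X.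
Qed.

Lemma trmx_horner_mx (R : comNzRingType) n (C : 'M[R]_n.+1) (p : {poly R}) :
  C^T = C -> (horner_mx C p)^T = horner_mx C p.
Proof.
move=> Csym; elim/poly_ind: p => [|p c IH]; first by rewrite rmorph0 trmx0.
rewrite rmorphD rmorphM /= horner_mx_X horner_mx_C linearD /= tr_scalar_mx.
rewrite -mulmxE trmx_mul IH Csym mulmxE; congr (_ + _).
exact: comm_mx_horner.
Qed.

Lemma horner_mx_krylov (R : realType) n (A : 'M[R]_n.+1) (g : 'cV[R]_n.+1)
    (p : {poly R}) k :
  (size p <= k)%N -> ((horner_mx A p *m g)^T <= krylov_mx k A g)%MS.
Proof.
move=> size_p; apply/submxP; exists (\row_(i < k) p`_i).
have {1}-> : p = \poly_(i < k) p`_i.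
  apply/polyP => i; rewrite coef_poly; case: ltnP => // /(leq_trans size_p) ?.
  by rewrite nth_default.
rewrite poly_def rmorph_sum mulmx_suml; apply/rowP => j; rewrite !mxE summxE.
apply: eq_bigr => i _; rewrite /= horner_mxZ rmorphXn /= horner_mx_X -scalemxAl.
by rewrite !mxE.
Qed.

Section Residual.
Variable R : realType.

Lemma chebT_mx_contraction n (C : 'M[R]_n.+1) k : C^T = C ->
  (forall v, dot (C *m v) (C *m v) <= dot v v) ->
  forall x, dot (horner_mx C (chebTU R k).1 *m x) (horner_mx C (chebTU R k).1 *m x)
            <= dot x x.
Proof.
move=> Csym C_contr x.
set T := (chebTU R k).1; set U := (chebTU R k).2.
set Tm := horner_mx C T; set Um := horner_mx C U.
have TT : T * T = 1 + U * (('X ^+ 2 - 1) * U).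
  transitivity (T ^+ 2 - ('X ^+ 2 - 1) * U ^+ 2 + U * (('X ^+ 2 - 1) * U)); first ring.
  by rewrite chebTU_pell.
have TmTm : Tm *m Tm = 1%:M + Um *m ((C *m C - 1%:M) *m Um).
  have := congr1 (horner_mx C) TT.
  rewrite !(rmorphM, rmorphD, rmorphB, rmorph1, rmorphXn) /= horner_mx_X.
  by rewrite -/Tm -/Um rmorphN rmorph1 !mulmxE.
have Um_sym : Um^T = Um := trmx_horner_mx U Csym.
rewrite dotMl trmx_horner_mx // mulmxA TmTm (mulmxDl _ _ x) mul1mx dotDr gerDl.
rewrite -mulmxA dotMr Um_sym -mulmxA (mulmxBl _ _ (Um *m x)) mul1mx dotBr.
rewrite -mulmxA dotMr Csym subr_le0.
exact: C_contr.
Qed.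

Definition cheb_rate (kappa : R) := (Num.sqrt kappa - 1) / (Num.sqrt kappa + 1).

Lemma cheb_rate_mid (kappa : R) : 1 < kappa ->
  0 < cheb_rate kappa /\
  (cheb_rate kappa + (cheb_rate kappa)^-1) / 2 = (kappa + 1) / (kappa - 1).
Proof.
move=> kappa_gt1; have kappa_gt0 := lt_trans ltr01 kappa_gt1.
have s_gt1 : 1 < Num.sqrt kappa by rewrite -sqrtr1 ltr_sqrt.
have kappa_E : kappa = Num.sqrt kappa ^+ 2 by rewrite sqr_sqrtr ?ltW.
split; first by rewrite divr_gt0 //; lra.
rewrite /cheb_rate [in RHS]kappa_E; field.
by rewrite -kappa_E !subr_eq0 !gt_eqF //; lra.
Qed.

Lemma cheb_rate_ge0 (kappa : R) : 1 <= kappa -> 0 <= cheb_rate kappa.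
Proof.
move=> kappa_ge1.
have s_ge1 : 1 <= Num.sqrt kappa by rewrite -sqrtr1 ler_sqrt // (le_trans ler01).
by rewrite divr_ge0 //; lra.
Qed.

Lemma joukowski_inv_le (t : R) k : 0 < t -> ((t ^+ k + t ^- k) / 2)^-1 <= 2 * t ^+ k.
Proof.
move=> t_gt0; have tk_gt0 : 0 < t ^+ k := exprn_gt0 k t_gt0.
rewrite -[X in X <= _]mul1r ler_pdivrMr ?divr_gt0 ?addr_gt0 ?invr_gt0 //.
have -> : 2 * t ^+ k * ((t ^+ k + t ^- k) / 2) = t ^+ k ^+ 2 + 1.
  by field; rewrite gt_eqF.
by rewrite lerDr sqr_ge0.
Qed.

Section SpectralBounds.
Variables (n : nat) (B : 'M[R]_n.+1) (mu M : R).
Hypothesis B_sym : B^T = B.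
Hypothesis mu_gt0 : 0 < mu.
Hypothesis B_bounds : forall v, mu * dot v v <= dot v (B *m v) <= M * dot v v.

(* The affine map sending the spectral interval [mu, M] of B onto [-1, 1]. *)
Lemma affine_spectral_contraction (C := (2 / (M - mu)) *: (((M + mu) / 2)%:M - B)) :
  mu < M -> forall v, dot (C *m v) (C *m v) <= dot v v.
Proof.
move=> mu_lt_M v; have beta_gt0 : 0 < 2 / (M - mu) by rewrite divr_gt0 // subr_gt0.
rewrite -[dot v v]mul1r -(expr1n _ 2); apply: sym_mx_norm_le => // [|{}v].
  by rewrite /C linearZ /= linearB /= tr_scalar_mx B_sym.
rewrite /C -scalemxAl dotZr mulmxBl mul_scalar_mx dotBr dotZr normrM.
rewrite gtr0_norm // mul1r; have [lo hi] := andP (B_bounds v).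
rewrite [X in _ <= X](_ : _ = 2 / (M - mu) * ((M - mu) / 2 * dot v v)); last first.
  by field; rewrite subr_eq0 gt_eqF.
by rewrite ler_pM2l //; apply/ler_normlP; split; lra.
Qed.

Lemma cheb_residual k : mu < M ->
  exists r : {poly R}, [/\ (size r <= k.+1)%N, r.[0] = 1 &
    forall x, dot (horner_mx B r *m x) (horner_mx B r *m x)
              <= (2 * cheb_rate (M / mu) ^+ k) ^+ 2 * dot x x].
Proof.
move=> mu_lt_M; set rho := cheb_rate (M / mu).
have [rho_gt0 rho_mid] : 0 < rho /\ (rho + rho^-1) / 2 = (M / mu + 1) / (M / mu - 1).
  by apply: cheb_rate_mid; rewrite ltr_pdivlMr // mul1r.
set c : {poly R} := (2 / (M - mu)) *: (((M + mu) / 2)%:P - 'X).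
set C := horner_mx B c.
have C_E : C = (2 / (M - mu)) *: (((M + mu) / 2)%:M - B).
  by rewrite /C /c linearZ /= rmorphB /= horner_mx_C horner_mx_X.
have C_sym : C^T = C by rewrite C_E linearZ /= linearB /= tr_scalar_mx B_sym.
have C_contr := affine_spectral_contraction mu_lt_M; rewrite -C_E in C_contr.
set T := (chebTU R k).1; set tau := T.[c.[0]].
have tau_E : tau = (rho ^+ k + rho ^- k) / 2.
  rewrite /tau -chebT_joukowski ?gt_eqF // rho_mid !hornerE; congr T.[_].
  by field; rewrite mulN1r subr_eq0 !gt_eqF.
have tau_gt0 : 0 < tau by rewrite tau_E divr_gt0 // addr_gt0 ?invr_gt0 ?exprn_gt0.
have tau_inv_le : tau^-1 <= 2 * rho ^+ k by rewrite tau_E joukowski_inv_le.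
exists (tau^-1 *: (T \Po c)); split.
- rewrite (leq_trans (size_scale_leq _ _)) // (leq_trans (size_comp_poly_leq _ _)) //.
  have [size_T _] := size_chebTU R k.
  have size_c : (size c <= 2)%N.
    by rewrite (leq_trans (size_scale_leq _ _)) // -opprB size_polyN size_XsubC.
  by rewrite ltnS -[k]muln1 leq_mul // -subn1 leq_subLR.
- by rewrite hornerZ horner_comp -/tau mulVf ?gt_eqF.
- move=> x; rewrite /= horner_mxZ horner_mx_comp -/C -scalemxAl dotZl dotZr mulrA.
  rewrite -expr2; apply: ler_pM; rewrite ?sqr_ge0 ?dotvv_ge0 //.
    by rewrite !expr2 ler_pM // invr_ge0 ltW.
  exact: chebT_mx_contraction C_sym C_contr x.
Qed.

Lemma flat_residual k : (0 < k)%N -> mu = M ->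
  exists r : {poly R}, [/\ (size r <= k.+1)%N, r.[0] = 1 &
    forall x, dot (horner_mx B r *m x) (horner_mx B r *m x)
              <= (2 * cheb_rate (M / mu) ^+ k) ^+ 2 * dot x x].
Proof.
move=> k_gt0 mu_M; exists (1 - mu^-1 *: 'X); split.
- rewrite (leq_trans (size_polyD _ _)) // geq_max size_poly1 size_polyN.
  by rewrite (leq_trans (size_scale_leq _ _)) // size_polyX ltnS.
- by rewrite !hornerE /=; lra.
have B_scalar (x : 'cV_n.+1) : B *m x = mu *: x.
  set D := B - mu%:M.
  have D_sym : D^T = D by rewrite linearB /= tr_scalar_mx B_sym.
  have D_null v : `|dot v (D *m v)| <= 0 * dot v v.
    have [lo hi] := andP (B_bounds v).
    by rewrite mul0r normr_le0 mulmxBl mul_scalar_mx dotBr dotZr -mu_M in hi *; lra.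
  have := sym_mx_norm_le D_sym (lexx 0) D_null x.
  rewrite expr0n mul0r => Dx_le0.
  have /dotvv_eq0 : dot (D *m x) (D *m x) = 0 by apply/le_anti; rewrite Dx_le0 dotvv_ge0.
  by rewrite mulmxBl mul_scalar_mx => /eqP; rewrite subr_eq0 => /eqP.
move=> x; have -> : horner_mx B (1 - mu^-1 *: 'X) *m x = 0.
  rewrite rmorphB rmorph1 /= horner_mxZ horner_mx_X mulmxBl mul1mx -scalemxAl.
  by rewrite B_scalar scalerA mulVf ?gt_eqF // scale1r subrr.
by rewrite dot0r mulr_ge0 ?sqr_ge0 ?dotvv_ge0.
Qed.

Lemma residual_poly k : (0 < k)%N -> mu <= M ->
  exists r : {poly R}, [/\ (size r <= k.+1)%N, r.[0] = 1 &
    forall x, dot (horner_mx B r *m x) (horner_mx B r *m x)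
              <= (2 * cheb_rate (M / mu) ^+ k) ^+ 2 * dot x x].
Proof.
move=> k_gt0; rewrite le_eqVlt => /orP[/eqP|]; first exact: flat_residual.
exact: cheb_residual.
Qed.

End SpectralBounds.

Lemma krylov_approx n (A : 'M[R]_n) (g x : 'cV[R]_n) (lam mu M : R) k :
  (0 < k)%N -> A^T = A -> 0 < mu <= M ->
  (forall v, mu * dot v v <= dot v ((A + lam%:M) *m v) <= M * dot v v) ->
  (A + lam%:M) *m x = - g ->
  exists2 z : 'cV[R]_n, (z^T <= krylov_mx k A g)%MS &
    dot (x - z) (x - z) <= (2 * cheb_rate (M / mu) ^+ k) ^+ 2 * dot x x.
Proof.
case: n => [|n] in A g x *.
  by exists 0; [rewrite trmx0 sub0mx | rewrite (flatmx0 x) subr0 dot0r mulr0].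
move=> k_gt0 A_sym /andP[mu_gt0 mu_le_M] B_bounds x_stat.
set B := A + lam%:M in B_bounds x_stat.
have B_sym : B^T = B by rewrite linearD /= A_sym tr_scalar_mx.
have [r [size_r r0 r_bound]] := residual_poly B_sym mu_gt0 B_bounds k_gt0 mu_le_M.
have /factor_theorem [q r_q] : root (1 - r) 0 by rewrite /root !hornerE r0 subrr.
rewrite polyC0 subr0 in r_q.
have size_q : (size q <= k)%N.
  have [->|q_neq0] := eqVneq q 0; first by rewrite size_poly0.
  rewrite -ltnS -(size_mulX q_neq0) -r_q (leq_trans (size_polyD _ _)) //.
  by rewrite geq_max size_polyN size_r size_poly1 ltnS.
have B_E : horner_mx A ('X + lam%:P) = B by rewrite rmorphD /= horner_mx_X horner_mx_C.
exists (horner_mx A (- q \Po ('X + lam%:P)) *m g).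
  apply: horner_mx_krylov; rewrite (leq_trans (size_comp_poly_leq _ _)) //.
  by rewrite size_XaddC muln1 size_polyN; case: (size q) size_q.
have -> : x - horner_mx A (- q \Po ('X + lam%:P)) *m g = horner_mx B r *m x.
  rewrite horner_mx_comp B_E rmorphN mulNmx -mulmxN -x_stat mulmxA.
  have -> : horner_mx B q *m B = horner_mx B (q * 'X).
    by rewrite rmorphM /= horner_mx_X mulmxE.
  by rewrite -r_q rmorphB rmorph1 mulmxBl mul1mx opprB addrC subrK.
exact: r_bound.
Qed.

End Residual.

Section TrustRegion.
Variable R : realType.

Lemma sin_vec_vec_le n (Delta : R) (xopt xk : 'cV[R]_n) : 0 < Delta ->
  sin_vec_vec Delta xopt xk <= vnorm (xopt - xk) / Delta.
Proof.
move=> D_gt0.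
have -> : vnorm (xopt - xk) / Delta = vnorm (Delta^-1 *: xopt - Delta^-1 *: xk).
  rewrite -scalerBr !vnormE dotZl dotZr mulrA -expr2 sqrtrM ?sqr_ge0 // sqrtr_sqr.
  by rewrite ger0_norm ?invr_ge0 ?ltW // mulrC.
apply: ge_inf; last by exists Delta^-1.
by exists 0 => _ [chi _ <-]; exact: vnorm_ge0.
Qed.

Lemma sin_vec_sub_sq n k (Q : 'M[R]_(n, k)) (x : 'cV[R]_n) :
  Q^T *m Q = 1%:M -> x != 0 ->
  sin_vec_sub x Q ^+ 2 = 1 - (vnorm (Q^T *m x) / vnorm x) ^+ 2.
Proof.
move=> QQ x_neq0; rewrite /sin_vec_sub !expr_div_n !vnorm_sq orthoproj_compl_sq //.
by field; rewrite -vnorm_sq expf_neq0 ?vnorm_eq0.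
Qed.

Lemma aligned_sphere_point n k (Q : 'M[R]_(n, k)) (x : 'cV[R]_n) (Delta : R) (i0 : 'I_k) :
  exists h : 'cV[R]_k,
    dot h h = Delta ^+ 2 /\ dot (Q *m h) x = Delta * vnorm (Q^T *m x).
Proof.
set w := Q^T *m x; have [w0|w_neq0] := eqVneq w 0.
  exists (Delta *: delta_mx i0 0); rewrite dotMl -/w w0 dotZl dotZr dot0r /dot.
  rewrite trmx_delta mul_delta_mx mxE !eqxx vnormE dot0r sqrtr0 !mulr0.
  by rewrite mulr1 expr2.
have wn_neq0 : vnorm w != 0 by rewrite vnorm_eq0.
exists ((Delta / vnorm w) *: w); rewrite dotMl -/w !(dotZl, dotZr) -vnorm_sq.
by split; field.
Qed.

Lemma trs_obj_lanczos n k (A : 'M[R]_n) (g : 'cV[R]_n) (Q : 'M[R]_(n, k))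
    (i0 : 'I_k) (h : 'cV[R]_k) :
  Q^T *m Q = 1%:M -> g != 0 -> (forall i, Q i i0 = g i 0 / vnorm g) ->
  trs_obj (Q^T *m A *m Q) (vnorm g *: delta_mx i0 0) h = trs_obj A g (Q *m h).
Proof.
move=> QQ g_neq0 Q1.
have g_E : g = vnorm g *: (Q *m delta_mx i0 0).
  apply/matrixP => i j; rewrite ord1 -colE !mxE Q1 mulrC divfK //.
  by rewrite vnorm_eq0.
by rewrite /trs_obj {2}g_E trmx_mul -!scalemxAr !mulmxA -(mulmxA h^T Q^T Q) QQ mulmx1.
Qed.

Lemma two_sub_two_le (c : R) : 0 <= c <= 1 ->
  2 - 2 * c <= (1 - c ^+ 2) + (1 - c ^+ 2) ^+ 2.
Proof.
move=> /andP[c_ge0 c_le1]; rewrite -subr_ge0.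
have -> : 1 - c ^+ 2 + (1 - c ^+ 2) ^+ 2 - (2 - 2 * c) = c * ((c - 1) ^+ 2 * (c + 2)).
  by ring.
by rewrite mulr_ge0 // mulr_ge0 ?sqr_ge0 //; lra.
Qed.

Lemma sqrt_quartic_le (s t : R) : 0 <= s -> s <= 2 * t ->
  Num.sqrt (s ^+ 2 + s ^+ 4) <= 2 * t + 4 * t ^+ 2.
Proof.
move=> s_ge0 s_le; apply: (@le_trans _ _ (s + s ^+ 2)).
  rewrite -[s + _]ger0_norm ?addr_ge0 ?sqr_ge0 // -sqrtr_sqr ler_sqrt ?sqr_ge0 //.
  rewrite -subr_ge0 (_ : _ - _ = 2 * s ^+ 3); last by ring.
  by rewrite mulr_ge0 ?exprn_ge0.
rewrite lerD // (_ : 4 * t ^+ 2 = (2 * t) ^+ 2); last by ring.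
by rewrite !expr2 ler_pM.
Qed.

End TrustRegion.

Section GLTR.
Variables (R : realType) (n k : nat) (A : 'M[R]_n) (g xopt xk : 'cV[R]_n).
Variables (Q : 'M[R]_(n, k)) (lam mu M Delta : R).
Hypothesis A_sym : A^T = A.
Hypothesis mu_gt0 : 0 < mu.
Hypothesis mu_le_M : mu <= M.
Hypothesis B_bounds :
  forall v, mu * dot v v <= dot v ((A + lam%:M) *m v) <= M * dot v v.
Hypothesis xopt_stat : (A + lam%:M) *m xopt = - g.
Hypothesis D_gt0 : 0 < Delta.
Hypothesis xopt_D : vnorm xopt = Delta.
Hypothesis QQ : Q^T *m Q = 1%:M.

Lemma gltr_error_bound (i0 : 'I_k) : vnorm xk = Delta ->
  (forall h, vnorm h <= Delta -> trs_obj A g xk <= trs_obj A g (Q *m h)) ->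
  mu * dot (xk - xopt) (xk - xopt)
    <= M * (2 * Delta ^+ 2 - 2 * (Delta * vnorm (Q^T *m xopt))).
Proof.
move=> xk_D xk_min.
have [h [hh_D Qh_xopt]] := aligned_sphere_point Q xopt Delta i0.
have [dxopt dxk dQh] : [/\ dot xopt xopt = Delta ^+ 2, dot xk xk = Delta ^+ 2
                         & dot (Q *m h) (Q *m h) = Delta ^+ 2].
  by rewrite orthonormal_dot // hh_D -!vnorm_sq xopt_D xk_D.
have fk_le : trs_obj A g xk <= trs_obj A g (Q *m h).
  by apply: xk_min; rewrite vnormE hh_D sqrtr_sqr ger0_norm // ltW.
have := trs_obj_sub_on_sphere A_sym xopt_stat (etrans dxk (esym dxopt)).
have := trs_obj_sub_on_sphere A_sym xopt_stat (etrans dQh (esym dxopt)).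
have /andP[lo _] := B_bounds (xk - xopt); have /andP[_ hi] := B_bounds (Q *m h - xopt).
have dy : dot (Q *m h - xopt) (Q *m h - xopt)
          = 2 * Delta ^+ 2 - 2 * (Delta * vnorm (Q^T *m xopt)).
  by rewrite !(dotBl, dotBr) dQh dxopt (dotC xopt) Qh_xopt; ring.
rewrite dy in hi; lra.
Qed.

Lemma gltr_sin_bound (i0 : 'I_k) : vnorm xk = Delta ->
  (forall h, vnorm h <= Delta -> trs_obj A g xk <= trs_obj A g (Q *m h)) ->
  sin_vec_vec Delta xopt xk <= Num.sqrt (M / mu) *
    Num.sqrt (sin_vec_sub xopt Q ^+ 2 + sin_vec_sub xopt Q ^+ 4).
Proof.
move=> xk_D xk_min; have err := gltr_error_bound i0 xk_D xk_min.
have D_ge0 := ltW D_gt0.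
have xopt_neq0 : xopt != 0 by rewrite -vnorm_eq0 xopt_D gt_eqF.
set c := vnorm (Q^T *m xopt) / Delta.
have sK2 : sin_vec_sub xopt Q ^+ 2 = 1 - c ^+ 2 by rewrite sin_vec_sub_sq // xopt_D.
have c_ge0 : 0 <= c by rewrite divr_ge0 ?vnorm_ge0.
have c_le1 : c <= 1.
  rewrite ler_pdivrMr // mul1r -xopt_D !vnormE ler_sqrt ?dotvv_ge0 //.
  by rewrite -subr_ge0 -orthoproj_compl_sq // dotvv_ge0.
have kappa_ge0 : 0 <= M / mu by rewrite divr_ge0 // ltW // (lt_le_trans mu_gt0).
apply: le_trans (sin_vec_vec_le _ _ D_gt0) _.
rewrite -sqrtrM // -[vnorm _ / _]ger0_norm ?divr_ge0 ?vnorm_ge0 // -sqrtr_sqr.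
rewrite -[4%N]/(2 * 2)%N exprM sK2 ler_sqrt; last first.
  by rewrite mulr_ge0 // addr_ge0 ?sqr_ge0 // subr_ge0 expr_le1.
apply: (@le_trans _ _ (M / mu * (2 - 2 * c))); last first.
  by rewrite ler_wpM2l // two_sub_two_le ?c_ge0.
rewrite expr_div_n vnorm_sq -opprB dotNl dotNr opprK ler_pdivrMr ?exprn_gt0 //.
rewrite [X in _ <= X](_ : _ =
  M * (2 * Delta ^+ 2 - 2 * (Delta * vnorm (Q^T *m xopt))) / mu).
  by rewrite ler_pdivlMr // mulrC.
by rewrite /c; field; rewrite !gt_eqF.
Qed.

Lemma krylov_sin_bound : (0 < k)%N -> (Q^T == krylov_mx k A g)%MS ->
  sin_vec_sub xopt Q <= 2 * cheb_rate (M / mu) ^+ k.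
Proof.
move=> k_gt0 QK; have mu_M : 0 < mu <= M by rewrite mu_gt0 mu_le_M.
have [z zK z_approx] := krylov_approx k_gt0 A_sym mu_M B_bounds xopt_stat.
have /submxP [cz z_E] : (z^T <= Q^T)%MS by case/andP: QK => _; exact: submx_trans.
have z_Q : z = Q *m cz^T by rewrite -[z]trmxK z_E trmx_mul trmxK.
have t_ge0 : 0 <= 2 * cheb_rate (M / mu) ^+ k.
  by rewrite mulr_ge0 ?exprn_ge0 ?cheb_rate_ge0 // ler_pdivlMr // mul1r.
rewrite /sin_vec_sub ler_pdivrMr; last by rewrite xopt_D.
rewrite !vnormE -[X in _ <= X * _](ger0_norm t_ge0).
rewrite -sqrtr_sqr -sqrtrM ?sqr_ge0 //.
rewrite ler_sqrt; last by rewrite mulr_ge0 ?sqr_ge0 ?dotvv_ge0.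
by rewrite (le_trans (orthoproj_compl_min QQ xopt cz^T)) // -z_Q.
Qed.

End GLTR.

Unset Implicit Arguments. Set Strict Implicit. Set Printing Implicit Defensive.

Theorem theorem4p4 (R : realType) (n k : nat) (A : 'M[R]_n) (g : 'cV[R]_n)
  (Delta alpha1 alphan : R) (xopt : 'cV[R]_n) (lambda : R)
  (Q : 'M[R]_(n, k)) (T : 'M[R]_k) (h : 'cV[R]_k) (xk : 'cV[R]_n)
  (hk : (0 < k)%N) :
  (* A symmetric, alpha1 / alphan its largest / smallest eigenvalues *)
  A^T = A ->
  eigenvalue A alpha1 -> eigenvalue A alphan ->
  (forall a : R, eigenvalue A a -> alphan <= a <= alpha1) ->
  g != 0 -> 0 < Delta ->
  (* x_opt: global minimizer of the TRS with multiplier lambda *)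
  vnorm xopt <= Delta ->
  (forall y : 'cV[R]_n, vnorm y <= Delta -> trs_obj A g xopt <= trs_obj A g y) ->
  0 <= lambda ->
  (A + lambda%:M) *m xopt = - g ->
  lambda * (Delta - vnorm xopt) = 0 ->
  (forall v : 'cV[R]_n, 0 <= (v^T *m (A + lambda%:M) *m v) 0 0) ->
  (* easy case *)
  - alphan < lambda ->
  (* Lanczos basis Q_k of K_k(A,g): orthonormal columns spanning K_k,
     q_1 = g/||g||, T_k = Q_k^T A Q_k tridiagonal *)
  Q^T *m Q = 1%:M ->
  (Q^T == krylov_mx k A g)%MS ->
  (forall i : 'I_n, Q i (Ordinal hk) = g i 0 / vnorm g) ->
  T = Q^T *m A *m Q ->
  tridiagonal T ->
  (* GLTR iterate x_k = Q_k h_k, h_k minimizes 1/2 h^T T h + ||g|| h^T e_1 on ||h|| <= Delta *)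
  vnorm h <= Delta ->
  (forall h' : 'cV[R]_k, vnorm h' <= Delta ->
     trs_obj T (vnorm g *: delta_mx (Ordinal hk) 0) h
       <= trs_obj T (vnorm g *: delta_mx (Ordinal hk) 0) h') ->
  xk = Q *m h ->
  (* boundary case *)
  vnorm xopt = Delta -> vnorm xk = Delta ->
  let kappa := (alpha1 + lambda) / (alphan + lambda) in
  let sK := sin_vec_sub xopt Q in
  let rho := (Num.sqrt kappa - 1) / (Num.sqrt kappa + 1) in
  sin_vec_vec Delta xopt xk <= Num.sqrt kappa * Num.sqrt (sK ^+ 2 + sK ^+ 4)
  /\ Num.sqrt kappa * Num.sqrt (sK ^+ 2 + sK ^+ 4)
     <= 2 * Num.sqrt kappa * rho ^+ k + 4 * Num.sqrt kappa * rho ^+ (2 * k).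
Proof.
move=> A_sym eig1 _ A_spec g_neq0 D_gt0 _ _ _ xopt_stat _ _ easy QQ QK Q1 T_E _ _ h_min
  xk_E xopt_D xk_D kappa sK rho.
set mu := alphan + lambda; set M := alpha1 + lambda.
have mu_gt0 : 0 < mu by rewrite /mu; lra.
have mu_le_M : mu <= M by have /andP[+ _] := A_spec _ eig1; rewrite /mu /M; lra.
have B_bounds v : mu * dot v v <= dot v ((A + lambda%:M) *m v) <= M * dot v v.
  have /andP[lo hi] := rayleigh_bounds A_sym A_spec v.
  by rewrite mulmxDl mul_scalar_mx dotDr dotZr /mu /M; apply/andP; split; lra.
have xk_min h' : vnorm h' <= Delta -> trs_obj A g xk <= trs_obj A g (Q *m h').
  by rewrite xk_E -!(trs_obj_lanczos _ _ QQ g_neq0 Q1) -T_E; exact: h_min.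
split.
  exact: gltr_sin_bound A_sym mu_gt0 mu_le_M B_bounds xopt_stat D_gt0 xopt_D QQ
    (Ordinal hk) xk_D xk_min.
rewrite mulnC exprM.
rewrite [X in _ <= X](_ : _ = Num.sqrt kappa * (2 * rho ^+ k + 4 * rho ^+ k ^+ 2)).
  apply: ler_wpM2l; first exact: sqrtr_ge0.
  apply: sqrt_quartic_le; first by rewrite divr_ge0 ?vnorm_ge0.
  exact: krylov_sin_bound A_sym mu_gt0 mu_le_M B_bounds xopt_stat D_gt0 xopt_D QQ hk QK.
by ring.
Qed.
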